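(* Let $(G,\lambda)$ and $(G',\lambda')$ be finite abelian $2$-groups with nonsingular symmetric linking pairings and $k\ge1$. If the layer forms $b_k$ of both are alternating, then the layer form $b_k$ of the orthogonal sum $(G\oplus G',\lambda\oplus\lambda')$ is alternating and $u_k(G\oplus G',\lambda\oplus\lambda')\equiv u_k(G,\lambda)+u_k(G',\lambda')\pmod 8$.
   Context: $G_k=\{x\in G:2^kx=0\}$, $P_k(G)=G_k/(G_{k-1}+2G_{k+1})$ with $\mathbb F_2$-form $b_k(\bar x,\bar y)=2^k\lambda(x,y)\bmod 2$. When $b_k$ is alternating, $q_k:H_k(G)=G/G_k\to\mathbb Q/\mathbb Z$, $q_k(\bar x)=2^{k-1}\lambda(x,x)$, is well defined, $\gamma_k=|H_k(G)|^{-1/2}\sum_{\bar x\in H_k(G)}\exp(2\pi iq_k(\bar x))$ is an eighth root of unity, and $u_k\in\mathbb Z/8$ is defined by $\gamma_k=\exp(\pi i u_k/4)$. *)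

From HB Require Import structures.
From mathcomp Require Import all_boot all_order all_algebra.
From mathcomp Require Import reals trigo.
From mathcomp Require Import complex.

Set Implicit Arguments.
Unset Strict Implicit.
Unset Printing Implicit Defensive.

Import Order.TTheory GRing.Theory Num.Theory.
Local Open Scope ring_scope.

(* Q/Z-valued pairings are represented by rational-valued lifts: a map     *)
(* lam : G -> G -> rat, where only lam x y modulo Z is meaningful.         *)
(* All definitions below depend only on lam modulo Z.                     *)

Definition intQ (q : rat) : bool := q \is a Num.int.

Definition is_2group (G : finZmodType) : Prop :=
  forall x : G, exists n : nat, x *+ (2 ^ n) = 0.

Definition linking_pairing (G : finZmodType) (lam : G -> G -> rat) : Prop :=
  [/\
      forall x y z : G, intQ (lam (x + y) z - lam x z - lam y z),
      forall x y : G, intQ (lam x y - lam y x)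
    & (* nonsingular: the adjoint G -> Hom(G, Q/Z) is injective
         (hence bijective, G being finite) *)
      forall x : G, (forall y : G, intQ (lam x y)) -> x = 0].

Definition Gk (G : finZmodType) (k : nat) : {set G} :=
  [set x : G | x *+ (2 ^ k) == 0].

(* b_k on representatives: b_k(x,y) = 2^k lam(x,y)  (an integer for x,y in G_k),
   to be read mod 2 *)
Definition bk (G : finZmodType) (lam : G -> G -> rat) (k : nat) (x y : G) : rat :=
  (2 ^ k)%:R * lam x y.

(* b_k is alternating on P_k(G) = G_k/(G_{k-1}+2G_{k+1}):
   b_k(xbar,xbar) = 0 in F_2 for every xbar, i.e. 2^k lam(x,x) is even
   for every x in G_k *)
Definition bk_alternating (G : finZmodType) (lam : G -> G -> rat) (k : nat) : Prop :=
  forall x : G, x \in Gk G k -> intQ (bk lam k x x / 2).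

(* H_k(G) = G / G_k, realised as the set of cosets x + G_k *)
Definition Hk (G : finZmodType) (k : nat) : {set {set G}} :=
  [set [set x + y | y in Gk G k] | x : G].

Definition qk (G : finZmodType) (lam : G -> G -> rat) (k : nat) (C : {set G}) : rat :=
  let x := odflt 0 [pick x in C] in (2 ^ k.-1)%:R * lam x x.

Definition expi2pi (R : realType) (q : rat) : R[i] :=
  Complex (cos (2 * pi * ratr q)) (sin (2 * pi * ratr q)).

Definition gammak (R : realType) (G : finZmodType) (lam : G -> G -> rat) (k : nat)
  : R[i] :=
  (((Num.sqrt (#|Hk G k|%:R : R))^-1)%:C)%C *
    \sum_(C in Hk G k) expi2pi R (qk lam k C).

Definition uk (R : realType) (G : finZmodType) (lam : G -> G -> rat) (k : nat)
  : 'Z_8 :=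
  odflt 0 [pick u : 'Z_8 | gammak R lam k == expi2pi R ((val u)%:R / 8)].

Definition prodZ (G G' : finZmodType) := (G * G')%type.
HB.instance Definition _ (G G' : finZmodType) := Finite.on (prodZ G G').
HB.instance Definition _ (G G' : finZmodType) := GRing.Zmodule.on (prodZ G G').

Definition osum (G G' : finZmodType) (lam : G -> G -> rat) (lam' : G' -> G' -> rat)
  : prodZ G G' -> prodZ G G' -> rat :=
  fun x y => lam x.1 y.1 + lam' x.2 y.2.

From HB Require Import structures.
From mathcomp Require Import all_boot all_order all_algebra.
From mathcomp Require Import reals trigo.
From mathcomp Require Import complex.
From mathcomp Require Import ring lra zify.

(* Write q(x) = 2^(k-1) lam(x, x) on representatives and e(t) = exp(2 pi i t).
   As b_k is alternating, q is integral on G_k, hence constant modulo Z on the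
   cosets of G_k, and sum_(x in G) e(q x) = |G_k| sum_(H_k) e(q_k).  For an
   orthogonal sum q splits as a sum, so these Gauss sums, |G_k| and |H_k| are
   multiplicative and gamma_k(G + G') = gamma_k(G) gamma_k(G').
   It remains to see that gamma_k is an eighth root of unity, so that u_k is
   really its exponent.  Nonsingularity gives (sum e(q)) (sum e(-q)) = |G| |G_k|.
   If 2^m kills G and d^2 = -7 mod 2^m, left multiplication by the quaternion
   1 + i + 2j + dk has orthogonal columns of squared norm 6 + d^2 = -1 mod 2^m,
   so it permutes G^4 and turns sum_i q(x_i) into - sum_i q(x_i).  Hence
   (sum e(q))^4 = (sum e(-q))^4, and gamma_k^8 = 1. *)

Set Implicit Arguments.
Unset Strict Implicit.
Unset Printing Implicit Defensive.

Import Order.TTheory GRing.Theory Num.Theory.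
Local Open Scope ring_scope.

Definition eqmodZ (a b : rat) : bool := intQ (a - b).

Section CongruenceModZ.
Implicit Types a b c d : rat.

Lemma eqmodZ_refl a : eqmodZ a a.
Proof. by rewrite /eqmodZ subrr /intQ rpred0. Qed.

Lemma eqmodZ_eq a b : a = b -> eqmodZ a b.
Proof. by move->; apply: eqmodZ_refl. Qed.

Lemma eqmodZ_sym a b : eqmodZ a b -> eqmodZ b a.
Proof. by rewrite /eqmodZ /intQ -opprB rpredN. Qed.

Lemma eqmodZ_trans b a c : eqmodZ a b -> eqmodZ b c -> eqmodZ a c.
Proof. by move=> ab bc; have := rpredD ab bc; rewrite addrA subrK. Qed.

Lemma eqmodZD a b c d : eqmodZ a b -> eqmodZ c d -> eqmodZ (a + c) (b + d).
Proof. by move=> ab cd; have := rpredD ab cd; rewrite /eqmodZ addrACA opprD. Qed.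

Lemma eqmodZN a b : eqmodZ a b -> eqmodZ (- a) (- b).
Proof. by rewrite /eqmodZ /intQ -opprD rpredN. Qed.

Lemma eqmodZMz (n : int) a b : eqmodZ a b -> eqmodZ (n%:~R * a) (n%:~R * b).
Proof. by move=> ab; have := rpredM (intr_int _ n) ab; rewrite /eqmodZ mulrBr. Qed.

Lemma eqmodZMn (n : nat) a b : eqmodZ a b -> eqmodZ (n%:R * a) (n%:R * b).
Proof. by rewrite pmulrn; apply: eqmodZMz. Qed.

Lemma eqmodZ_sum (I : finType) (F F' : I -> rat) :
  (forall i, eqmodZ (F i) (F' i)) -> eqmodZ (\sum_i F i) (\sum_i F' i).
Proof. by move=> FF'; rewrite /eqmodZ -sumrB; apply: rpred_sum => i _; apply: FF'. Qed.

Lemma eqmodZ0 a : eqmodZ a 0 = intQ a.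
Proof. by rewrite /eqmodZ subr0. Qed.

End CongruenceModZ.

Definition additive_modZ (G : zmodType) (f : G -> rat) :=
  forall x y, eqmodZ (f (x + y)) (f x + f y).

Section AdditiveModZ.
Variables (G : zmodType) (f : G -> rat).
Hypothesis fD : additive_modZ f.

Lemma additive_modZ0 : eqmodZ (f 0) 0.
Proof.
have := fD 0 0; rewrite addr0 eqmodZ0 /eqmodZ opprD addrA subrr sub0r.
by rewrite /intQ rpredN.
Qed.

Lemma additive_modZN x : eqmodZ (f (- x)) (- f x).
Proof.
have : eqmodZ (f x + f (- x)) 0.
  by apply: eqmodZ_trans (eqmodZ_sym (fD _ _)) _; rewrite subrr additive_modZ0.
by rewrite /eqmodZ; congr intQ; ring.
Qed.

Lemma additive_modZMn x n : eqmodZ (f (x *+ n)) (n%:R * f x).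
Proof.
elim: n => [|n IHn]; first by rewrite mul0r; apply: additive_modZ0.
rewrite mulrS -addn1 natrD; apply: eqmodZ_trans (fD _ _) _.
by apply: eqmodZ_trans (eqmodZD (eqmodZ_refl _) IHn) _; apply: eqmodZ_eq; ring.
Qed.

Lemma additive_modZMz x (n : int) : eqmodZ (f (x *~ n)) (n%:~R * f x).
Proof.
case: n => n; first by rewrite -pmulrn; apply: additive_modZMn.
rewrite NegzE mulrNz mulNr; apply: eqmodZ_trans (additive_modZN _) _.
by apply: eqmodZN; rewrite -!pmulrn; apply: additive_modZMn.
Qed.

Lemma additive_modZ_sum (I : Type) (r : seq I) (x : I -> G) :
  eqmodZ (f (\sum_(i <- r) x i)) (\sum_(i <- r) f (x i)).
Proof.
elim: r => [|i r IHr]; first by rewrite !big_nil additive_modZ0.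
rewrite !big_cons; apply: eqmodZ_trans (fD _ _) _.
exact: eqmodZD (eqmodZ_refl _) IHr.
Qed.

Lemma additive_modZ_scale (n : nat) : additive_modZ (fun x => n%:R * f x).
Proof. by move=> x y; rewrite -mulrDr; apply: eqmodZMn. Qed.

End AdditiveModZ.

Section LinkingPairing.
Variables (G : finZmodType) (lam : G -> G -> rat).
Hypothesis hlam : linking_pairing lam.

Lemma linking_additivel z : additive_modZ (lam^~ z).
Proof. by case: hlam => lamD _ _ x y; move: (lamD x y z); rewrite /eqmodZ opprD addrA. Qed.

Lemma linking_sym x y : eqmodZ (lam x y) (lam y x).
Proof. by case: hlam => _ lamC _; apply: lamC. Qed.

Lemma linking_additiver x : additive_modZ (lam x).
Proof.
move=> y z; apply: eqmodZ_trans (linking_sym _ _) _.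
apply: eqmodZ_trans (linking_additivel _ _ _) _.
by apply: eqmodZD; apply: linking_sym.
Qed.

Lemma linking0r x : intQ (lam x 0).
Proof. by rewrite -eqmodZ0; apply: additive_modZ0 (linking_additiver x). Qed.

End LinkingPairing.

Section ExpI2Pi.
Variable R : realType.
Local Notation e := (expi2pi R).

Lemma expi2piD a b : e (a + b) = e a * e b.
Proof. by rewrite /expi2pi rmorphD mulrDr cosD sinD; simpc; congr Complex; ring. Qed.

Lemma expi2pi_nat n : e n%:R = 1.
Proof.
rewrite /expi2pi ratr_nat -[2 * pi * _]add0r mulrC mulr_natl mulr_natl.
by rewrite (periodicn (@cosD2pi R)) (periodicn (@sinD2pi R)) cos0 sin0.
Qed.

Lemma expi2pi0 : e 0 = 1.
Proof. exact: expi2pi_nat 0. Qed.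

Lemma expi2pi_int (n : int) : e n%:~R = 1.
Proof.
case: n => n; first by rewrite -pmulrn expi2pi_nat.
have := expi2piD (Negz n)%:~R n.+1%:R.
by rewrite NegzE mulrNz -pmulrn addNr expi2pi0 expi2pi_nat mulr1.
Qed.

Lemma expi2pi_intQ a : intQ a -> e a = 1.
Proof. by move=> /intrP[n ->]; apply: expi2pi_int. Qed.

Lemma expi2pi_eqmodZ a b : eqmodZ a b -> e a = e b.
Proof.
move=> /intrP[n abn]; rewrite -[a](subrK b) abn addrC expi2piD.
by rewrite expi2pi_int mulr1.
Qed.

Lemma expi2pi_eq1 q : e q = 1 -> intQ q.
Proof.
(* Round q to the nearest integer: |2 pi r| <= pi for the remainder r, and cos
   is injective on [0, pi]. *)
move=> eq1; set m := Num.floor (q + 2^-1); set r := q - m%:~R.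
have /andP[mr rm] := floor_itv (q + 2^-1); rewrite -/m intrD in mr rm.
suff r0 : r = 0 by rewrite -[q](subrK m%:~R) -/r r0 add0r; apply: intr_int.
have : e r = 1.
  by rewrite -eq1; apply: expi2pi_eqmodZ; rewrite /eqmodZ addrAC subrr add0r /intQ rpredN intr_int.
rewrite /expi2pi => -[cos1 _]; set x := 2 * pi * ratr r in cos1.
have r_small : ratr `|r| <= 2^-1 :> R.
  have : `|r| <= 2^-1 by rewrite /r ler_norml; apply/andP; split; lra.
  by rewrite -(ler_rat R) fmorphV rmorph_nat.
have x_in : `|x| \in `[0, pi].
  rewrite in_itv /= normr_ge0 normrM ger0_norm ?mulr_ge0 ?pi_ge0 // -ratr_norm.
  have := @pi_ge0 R; nra.
have := cosK x_in; rewrite cos_norm cos1 acos1 => /esym/normr0_eq0/eqP.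
rewrite mulf_eq0 mulf_eq0 pnatr_eq0 (gt_eqF (@pi_gt0 R)) /= => /eqP ratr0.
by apply/eqP; rewrite eq_le -(lerq0 R) -(ler0q R) ratr0 lexx.
Qed.

Lemma expi2piX a n : e a ^+ n = e (a * n%:R).
Proof.
elim: n => [|n IHn]; first by rewrite mulr0 expi2pi0.
by rewrite exprS IHn -expi2piD mulrS mulrDr mulr1.
Qed.

Lemma expi2pi_sum (I : finType) (F : I -> rat) : e (\sum_i F i) = \prod_i e (F i).
Proof. exact: (big_morph e expi2piD expi2pi0). Qed.

Definition root8 (u : 'Z_8) : R[i] := e ((val u)%:R / 8).

Lemma root8D u v : root8 (u + v) = root8 u * root8 v.
Proof.
rewrite /root8 -expi2piD; apply: expi2pi_eqmodZ; rewrite /eqmodZ /=.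
have /(congr1 (GRing.natmul (1 : rat))) := divn_eq (u + v) 8.
rewrite !natrD natrM => uv.
rewrite [X in intQ X](_ : _ = - ((u + v) %/ 8)%:R); last by lra.
by rewrite /intQ rpredN rpred_nat.
Qed.

Lemma root8_inj : injective root8.
Proof.
move=> u v uv; apply/eqP; rewrite -subr_eq0; apply/eqP.
have : root8 (u - v) = 1 by rewrite root8D uv -root8D subrr /root8 mul0r expi2pi0.
case: (u - v) => n lt_n8; rewrite /root8 /= => /expi2pi_eq1/intrP[m nm].
have /intr_inj n8m : n%:Z%:~R = (8 * m)%:~R :> rat.
  by rewrite intrM -nm -pmulrn mulrC divfK.
have n_lt8 : (n < 8)%N := lt_n8.
by apply: val_inj => /=; lia.
Qed.

Lemma root8_onto z : z ^+ 8 = 1 -> exists u, z = root8 u.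
Proof.
move=> z8; case: (pickP (fun u => z == root8 u)) => [u /eqP | z_new]; first by exists u.
have uniq_z : uniq (z :: map root8 (enum 'Z_8)).
  rewrite /= map_inj_uniq ?enum_uniq ?andbT; last exact: root8_inj.
  by apply/mapP => -[u _ zu]; move: (z_new u); rewrite zu eqxx.
have roots_z : all 8.-unity_root (z :: map root8 (enum 'Z_8)).
  rewrite /= unity_rootE z8 eqxx /=; apply/allP => _ /mapP[u _ ->].
  by rewrite unity_rootE /root8 expi2piX mulfVK // expi2pi_nat.
have := max_unity_roots (isT : (0 < 8)%N) roots_z uniq_z.
by rewrite /= size_map size_enum_ord.
Qed.

End ExpI2Pi.

Section Cosets.
Variables (G : finZmodType) (A : {set G}).
Hypothesis A_zmod : zmod_closed A.

Definition coset (x : G) : {set G} := [set x + a | a in A].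

Lemma mem_coset x u : (u \in coset x) = (u - x \in A).
Proof.
apply/imsetP/idP => [[a Aa ->]|Aux]; first by rewrite addrC addKr.
by exists (u - x); rewrite // addrC subrK.
Qed.

Lemma eq_coset x y : (coset x == coset y) = (x \in coset y).
Proof.
have [_ AB] := A_zmod; have [_ AD] := GRing.zmod_closedD A_zmod.
apply/eqP/idP => [<-|Axy]; first by rewrite mem_coset subrr; case: A_zmod.
apply/setP => u; rewrite !mem_coset; rewrite mem_coset in Axy.
apply/idP/idP => Au.
  have -> : u - y = (u - x) + (x - y) by rewrite addrA subrK.
  exact: AD.
have -> : u - x = (u - y) - (x - y) by rewrite opprB addrA subrK.
exact: AB.
Qed.

Lemma card_coset x : #|coset x| = #|A|.
Proof. by rewrite card_imset //; apply: addrI. Qed.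

Lemma sum_cosets (L : nmodType) (W : {set G} -> L) :
  \sum_x W (coset x) = (\sum_(C in [set coset x | x : G]) W C) *+ #|A|.
Proof.
rewrite (partition_big_imset coset) -sumrMnl.
apply: eq_bigr => _ /imsetP[y _ ->].
rewrite -(card_coset y) -sumr_const; apply: eq_big => [x|x /eqP -> //].
by rewrite -eq_coset.
Qed.

Lemma card_cosets : #|G| = (#|[set coset x | x : G]| * #|A|)%N.
Proof. by have := sum_cosets (fun=> 1%N); rewrite !sumr_const -mulrnA !natn cardT. Qed.

End Cosets.

Section QuadraticRefinement.
Variables (G : finZmodType) (lam : G -> G -> rat) (k : nat).
Hypotheses (hlam : linking_pairing lam) (k_gt0 : (0 < k)%N).

Definition qrep (x : G) : rat := (2 ^ k.-1)%:R * lam x x.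

Let pow2k : (2 ^ k)%:R = 2 * (2 ^ k.-1)%:R :> rat.
Proof. by rewrite -natrM -expnS prednK. Qed.

Lemma bk_diag x : bk lam k x x = 2 * qrep x.
Proof. by rewrite /bk pow2k mulrA. Qed.

Lemma bk_additivel y : additive_modZ (bk lam k ^~ y).
Proof. exact/additive_modZ_scale/linking_additivel. Qed.

Lemma bk_additiver x : additive_modZ (bk lam k x).
Proof. exact/additive_modZ_scale/linking_additiver. Qed.

Lemma bkMz x y (c c' : int) :
  eqmodZ (bk lam k (x *~ c) (y *~ c')) ((c * c')%:~R * bk lam k x y).
Proof.
apply: eqmodZ_trans (additive_modZMz (bk_additivel _) _ _) _.
apply: eqmodZ_trans (eqmodZMz c (additive_modZMz (bk_additiver _) _ _)) _.
by apply: eqmodZ_eq; rewrite intrM mulrA.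
Qed.

Lemma qrep0 : intQ (qrep 0).
Proof.
rewrite -eqmodZ0 /qrep -(mulr0 (2 ^ k.-1)%:R); apply: eqmodZMn.
exact: additive_modZ0 (linking_additivel hlam 0).
Qed.

Lemma qrepD x y : eqmodZ (qrep (x + y)) (qrep x + qrep y + bk lam k x y).
Proof.
have lamxy : eqmodZ (lam (x + y) (x + y)) (lam x x + lam y y + 2 * lam x y).
  apply: eqmodZ_trans (linking_additivel hlam _ _ _) _.
  apply: eqmodZ_trans (eqmodZD (linking_additiver hlam _ _ _) (linking_additiver hlam _ _ _)) _.
  apply: eqmodZ_trans (eqmodZD (eqmodZ_refl _) (eqmodZD (linking_sym hlam y x) (eqmodZ_refl _))) _.
  by apply: eqmodZ_eq; ring.
rewrite /qrep /bk pow2k; apply: eqmodZ_trans (eqmodZMn _ lamxy) _.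
by apply: eqmodZ_eq; ring.
Qed.

Lemma qrepMz x (c : int) : eqmodZ (qrep (x *~ c)) ((c ^+ 2)%:~R * qrep x).
Proof.
have lamc : eqmodZ (lam (x *~ c) (x *~ c)) ((c ^+ 2)%:~R * lam x x).
  apply: eqmodZ_trans (additive_modZMz (linking_additivel hlam _) _ _) _.
  apply: eqmodZ_trans (eqmodZMz c (additive_modZMz (linking_additiver hlam _) _ _)) _.
  by apply: eqmodZ_eq; rewrite mulrA -intrM expr2.
rewrite /qrep; apply: eqmodZ_trans (eqmodZMn _ lamc) _.
by apply: eqmodZ_eq; ring.
Qed.

Lemma Gk_zmod_closed : zmod_closed (Gk G k).
Proof.
split=> [|a b]; first by rewrite inE mul0rn.
by rewrite !inE mulrnBl => /eqP-> /eqP->; rewrite subrr.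
Qed.

Lemma card_Gk_gt0 : (0 < #|Gk G k|)%N.
Proof. by apply/card_gt0P; exists 0; rewrite inE mul0rn. Qed.

Lemma bk_Gkr x y : y \in Gk G k -> intQ (bk lam k x y).
Proof.
rewrite inE => /eqP y0; rewrite -eqmodZ0.
apply: eqmodZ_trans (eqmodZ_sym (additive_modZMn (linking_additiver hlam x) y _)) _.
by rewrite y0 eqmodZ0 linking0r.
Qed.

Lemma bk_nondegenerate z : (forall y, intQ (bk lam k y z)) -> z \in Gk G k.
Proof.
move=> bk_int; rewrite inE; case: hlam => _ _ nonsing; apply/eqP/nonsing => y.
rewrite -eqmodZ0; apply: eqmodZ_trans (additive_modZMn (linking_additivel hlam y) _ _) _.
apply: eqmodZ_trans (eqmodZMn _ (linking_sym hlam z y)) _.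
by rewrite eqmodZ0; apply: bk_int.
Qed.

Hypothesis halt : bk_alternating lam k.

Lemma qrep_Gk x : x \in Gk G k -> intQ (qrep x).
Proof. by move=> /halt; rewrite bk_diag mulrC mulKf. Qed.

Lemma qrep_coset x y : y \in Gk G k -> eqmodZ (qrep (x + y)) (qrep x).
Proof.
move=> Gky; apply: eqmodZ_trans (qrepD _ _) _.
rewrite -addrA -[X in eqmodZ _ X]addr0; apply: eqmodZD (eqmodZ_refl _) _.
by rewrite eqmodZ0; apply: rpredD; [apply: qrep_Gk | apply: bk_Gkr].
Qed.

Lemma qk_coset x : eqmodZ (qk lam k (coset (Gk G k) x)) (qrep x).
Proof.
rewrite /qk; case: pickP => [y | none] /=; last first.
  by have := none x; rewrite mem_coset subrr inE mul0rn eqxx.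
by rewrite mem_coset => /(qrep_coset x); rewrite addrC subrK.
Qed.

End QuadraticRefinement.

Lemma card_Hk (G : finZmodType) k : #|G| = (#|Hk G k| * #|Gk G k|)%N.
Proof. exact: card_cosets (Gk_zmod_closed G k). Qed.

Lemma card_Hk_gt0 (G : finZmodType) k : (0 < #|Hk G k|)%N.
Proof. by apply/card_gt0P; exists (coset (Gk G k) 0); apply: imset_f. Qed.

Section GaussSums.
Variables (R : realType) (G : finZmodType) (lam : G -> G -> rat) (k : nat).
Hypotheses (hlam : linking_pairing lam) (k_gt0 : (0 < k)%N).
Local Notation e := (expi2pi R).

Lemma sum_expi2pi_bk z :
  \sum_y e (bk lam k y z) = if z \in Gk G k then #|G|%:R else 0.
Proof.
case: ifPn => [Gkz | NGkz].
  rewrite (eq_bigr (fun=> 1)) ?sumr_const ?cardT // => y _.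
  by rewrite expi2pi_intQ ?(bk_Gkr hlam).
have [y0 bk_y0] : exists y0, ~~ intQ (bk lam k y0 z).
  apply/existsP; apply: contraNT NGkz => /existsPn bk_int.
  by apply: (bk_nondegenerate hlam) => y; apply/negPn/bk_int.
set S := \sum_y _.
have S_invariant : S = e (bk lam k y0 z) * S.
  rewrite {1}/S (reindex_inj (addrI y0)) mulr_sumr; apply: eq_bigr => y _.
  by rewrite -expi2piD; apply: expi2pi_eqmodZ; exact: (bk_additivel k hlam z y0 y).
have /eqP : (1 - e (bk lam k y0 z)) * S = 0 by rewrite mulrBl mul1r -S_invariant subrr.
rewrite mulf_eq0 subr_eq0 => /orP[/eqP/esym/expi2pi_eq1 | /eqP //].
by rewrite (negbTE bk_y0).
Qed.

Hypothesis halt : bk_alternating lam k.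

Lemma sum_expi2pi_qrep :
  \sum_x e (qrep lam k x) = (\sum_(C in Hk G k) e (qk lam k C)) *+ #|Gk G k|.
Proof.
rewrite -(sum_cosets (Gk_zmod_closed G k)); apply: eq_bigr => x _.
by apply: expi2pi_eqmodZ; apply/eqmodZ_sym/(qk_coset hlam k_gt0 halt).
Qed.

Lemma gauss_sum_norm :
  (\sum_x e (qrep lam k x)) * (\sum_y e (- qrep lam k y)) = (#|G| * #|Gk G k|)%:R.
Proof.
rewrite mulr_sumr.
transitivity (\sum_y \sum_z e (qrep lam k z) * e (bk lam k y z)).
  apply: eq_bigr => y _; rewrite mulr_suml (reindex_inj (addrI y)).
  apply: eq_bigr => z _; rewrite -!expi2piD; apply: expi2pi_eqmodZ.
  apply: eqmodZ_trans (eqmodZD (qrepD hlam k_gt0 y z) (eqmodZ_refl _)) _.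
  by apply: eqmodZ_eq; ring.
transitivity (\sum_(z in Gk G k) #|G|%:R : R[i]); last by rewrite sumr_const -mulrnA.
rewrite exchange_big (bigID (mem (Gk G k))) /= [X in _ + X]big1 ?addr0 => [|z NGkz].
  apply: eq_bigr => z Gkz; rewrite -mulr_sumr sum_expi2pi_bk Gkz.
  by rewrite expi2pi_intQ ?mul1r ?(qrep_Gk k_gt0 halt).
by rewrite -mulr_sumr sum_expi2pi_bk (negbTE NGkz) mulr0.
Qed.

Lemma gammakE : gammak R lam k =
  ((Num.sqrt (#|Hk G k|%:R : R))^-1)%:C%C * (\sum_x e (qrep lam k x)) / #|Gk G k|%:R.
Proof.
rewrite sum_expi2pi_qrep -[_ *+ #|Gk G k|]mulr_natr mulrA mulfK // pnatr_eq0 -lt0n.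
exact: card_Gk_gt0.
Qed.

End GaussSums.

Section MatrixAction.
Variables (G : zmodType) (n : nat).

Definition mxact (A : 'M[int]_n) (f : {ffun 'I_n -> G}) : {ffun 'I_n -> G} :=
  [ffun i => \sum_j f j *~ A i j].

Lemma mxactM A B f : mxact A (mxact B f) = mxact (A *m B) f.
Proof.
apply/ffunP => i; rewrite !ffunE.
under eq_bigr => j _ do rewrite ffunE mulrz_suml.
rewrite exchange_big /=; apply: eq_bigr => l _.
by rewrite mxE mulrz_sumr; apply: eq_bigr => j _; rewrite -mulrzA mulrC.
Qed.

Lemma mxact_scalar (c : int) f : mxact c%:M f = [ffun i => f i *~ c].
Proof.
apply/ffunP => i; rewrite !ffunE (bigD1 i) //= big1 ?addr0 => [|j /negbTE ji].
  by rewrite mxE eqxx mulr1n.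
by rewrite mxE eq_sym ji mulr0n mulr0z.
Qed.

End MatrixAction.

Section OrthogonalSums.
Variables (G : finZmodType) (lam : G -> G -> rat) (k n : nat).
Hypotheses (hlam : linking_pairing lam) (k_gt0 : (0 < k)%N).

Definition qsum (f : {ffun 'I_n -> G}) : rat := \sum_i qrep lam k (f i).
Definition bsum (f g : {ffun 'I_n -> G}) : rat := \sum_i bk lam k (f i) (g i).

Lemma qsumD f g : eqmodZ (qsum (f + g)) (qsum f + qsum g + bsum f g).
Proof.
rewrite /qsum /bsum -!big_split; apply: eqmodZ_sum => i /=.
by rewrite ffunE; apply: qrepD.
Qed.

Lemma bsum_additiver f : additive_modZ (bsum f).
Proof.
move=> g h; rewrite /bsum -big_split; apply: eqmodZ_sum => i /=.
by rewrite ffunE; apply: bk_additiver.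
Qed.

Lemma qsum_orthogonal (I : eqType) (r : seq I) (g : I -> {ffun 'I_n -> G}) :
    uniq r -> {in r &, forall j l, j != l -> intQ (bsum (g j) (g l))} ->
  eqmodZ (qsum (\sum_(j <- r) g j)) (\sum_(j <- r) qsum (g j)).
Proof.
elim: r => [_ _|j r IHr /= /andP[jNr r_uniq] orth].
  by rewrite !big_nil eqmodZ0; apply: rpred_sum => i _; rewrite ffunE; apply: qrep0.
rewrite !big_cons; apply: eqmodZ_trans (qsumD _ _) _.
rewrite -[X in eqmodZ _ X]addr0; apply: eqmodZD.
  apply: eqmodZD (eqmodZ_refl _) (IHr r_uniq _) => l l' lr l'r.
  by apply: orth; rewrite inE ?lr ?l'r orbT.
apply: eqmodZ_trans (additive_modZ_sum (bsum_additiver _) _ _) _.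
rewrite eqmodZ0 big_seq; apply: rpred_sum => l lr; apply: orth.
- by rewrite inE eqxx.
- by rewrite inE lr orbT.
- by apply: contraNneq jNr => ->.
Qed.

Lemma qsum_mxact (A : 'M[int]_n) (c : int) f :
  A^T *m A = c%:M -> eqmodZ (qsum (mxact A f)) (c%:~R * qsum f).
Proof.
move=> AtA; have AtAE j l : \sum_i A i j * A i l = c *+ (j == l).
  have := congr1 (fun M : 'M[int]_n => M j l) AtA; rewrite !mxE => <-.
  by apply: eq_bigr => i _; rewrite mxE.
set g := fun j => [ffun i => f j *~ A i j].
have -> : mxact A f = \sum_j g j.
  by apply/ffunP => i; rewrite sum_ffunE !ffunE; apply: eq_bigr => j _; rewrite ffunE.
apply: eqmodZ_trans (qsum_orthogonal (index_enum_uniq _) _) _.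
  move=> j l _ _ jl; rewrite -eqmodZ0.
  apply: eqmodZ_trans (eqmodZ_sum (F' := fun i => (A i j * A i l)%:~R * bk lam k (f j) (f l)) _) _.
    by move=> i; rewrite !ffunE; apply: bkMz.
  by rewrite -mulr_suml -rmorph_sum AtAE (negbTE jl) mulr0n mul0r; apply: eqmodZ_refl.
rewrite mulr_sumr; apply: eqmodZ_sum => j.
apply: eqmodZ_trans (eqmodZ_sum (F' := fun i => (A i j ^+ 2)%:~R * qrep lam k (f j)) _) _.
  by move=> i; rewrite ffunE; apply: qrepMz.
rewrite -mulr_suml -rmorph_sum; under eq_bigr do rewrite expr2.
by rewrite AtAE eqxx; apply: eqmodZ_refl.
Qed.

End OrthogonalSums.

Lemma odd_sqrt_neg7_mod2X m : exists2 d, odd d & (2 ^ m.+3 %| d ^ 2 + 7)%N.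
Proof.
(* Hensel lifting: when d^2 + 7 = 2^(m+3) t with t odd, d + 2^(m+2) works. *)
elim: m => [|m [d d_odd /dvdnP[t dt]]]; first by exists 1%N; last exact: (dvdnn 8).
set X := (2 ^ m.+1)%N; have X3 : (2 ^ m.+3 = 2 * 2 * X)%N by rewrite /X !expnS !mulnA.
rewrite X3 in dt.
case t_odd: (odd t); last first.
  exists d => //; apply/dvdnP; exists t./2.
  by rewrite dt expnS X3 -{1}(odd_double_half t) t_odd add0n -muln2; ring.
exists (d + 2 * X)%N; first by rewrite oddD d_odd oddM.
have -> : ((d + 2 * X) ^ 2 + 7 = (d ^ 2 + 7) + 2 * 2 * X * (d + X))%N by ring.
rewrite dt mulnC -mulnDr expnS X3 mulnC dvdn_pmul2l ?muln_gt0 ?expn_gt0 //.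
by rewrite dvdn2 !oddD t_odd d_odd /X oddX.
Qed.

Lemma exists_sqrt_neg7_mod2X n : exists d, (2 ^ n %| d ^ 2 + 7)%N.
Proof.
have [d _ dvd_d] := odd_sqrt_neg7_mod2X n; exists d; apply: dvdn_trans dvd_d.
by rewrite dvdn_exp2l //; lia.
Qed.

Lemma is_2group_exponent (G : finZmodType) :
  is_2group G -> exists n, forall x : G, x *+ 2 ^ n = 0.
Proof.
move=> G2; have exp_x (x : G) : exists n, x *+ 2 ^ n == 0.
  by have [n xn] := G2 x; exists n; apply/eqP.
exists (\max_y xchoose (exp_x y))%N => x.
rewrite -(subnKC (leq_bigmax (F := fun y => xchoose (exp_x y)) x)) expnD mulrnA.
by rewrite (eqP (xchooseP (exp_x x))) mul0rn.
Qed.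

(* Left multiplication by the quaternion 1 + i + 2j + dk. *)
Definition qmat (d : int) : 'M[int]_4 := \matrix_(i, j)
  (nth [::] [:: [:: 1; -1; -2; - d]; [:: 1; 1; - d; 2];
                [:: 2; d; 1; -1];    [:: d; -2; 1; 1]] i)`_j.

Lemma qmat_orthogonal d : (qmat d)^T *m qmat d = (6 + d ^+ 2)%:M.
Proof.
apply/matrixP => i j; rewrite !mxE !big_ord_recl big_ord0 !mxE.
case: i => -[|[|[|[|?]]]] ? //; case: j => -[|[|[|[|?]]]] ? //=.
all: by rewrite ?mulr1n ?mulr0n; ring.
Qed.

Lemma qmat_norm_succ (d : nat) : 6 + d%:Z ^+ 2 + 1 = (d ^ 2 + 7)%N.
Proof. by rewrite PoszD expr2 -PoszM mulnn; lia. Qed.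

Section Quaternion.
Variables (G : finZmodType) (m d : nat).
Hypotheses (G_exp : forall x : G, x *+ 2 ^ m = 0) (d_sqrt : (2 ^ m %| d ^ 2 + 7)%N).

Lemma mulrz_qmat_norm (x : G) : x *~ (6 + d%:Z ^+ 2) = - x.
Proof.
have [t dt] := dvdnP d_sqrt.
apply/eqP; rewrite -addr_eq0 -[X in _ + X]mulr1z -mulrzDr qmat_norm_succ.
by rewrite -pmulrn dt mulnC mulrnA G_exp mul0rn.
Qed.

Lemma mxact_qmat_inj : injective (@mxact G 4 (qmat d)).
Proof.
move=> f g /(congr1 (mxact (qmat d)^T)); rewrite !mxactM qmat_orthogonal !mxact_scalar.
move=> /ffunP fg; apply/ffunP => i.
by have := fg i; rewrite !ffunE !mulrz_qmat_norm => /oppr_inj.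
Qed.

Variables (lam : G -> G -> rat) (k : nat).
Hypotheses (hlam : linking_pairing lam) (k_gt0 : (0 < k)%N).

Lemma qrep_exp x : intQ ((2 ^ m)%:R * qrep lam k x).
Proof.
have lam_exp : intQ ((2 ^ m)%:R * lam x x).
  rewrite -eqmodZ0.
  apply: eqmodZ_trans (eqmodZ_sym (additive_modZMn (linking_additivel hlam x) x _)) _.
  by rewrite G_exp; apply: additive_modZ0 (linking_additivel hlam x).
by rewrite /qrep mulrCA; apply: rpredM; [apply: rpred_nat | apply: lam_exp].
Qed.

Lemma qsum_qmat f : eqmodZ (qsum lam k (mxact (qmat d) f)) (- qsum lam k f).
Proof.
apply: eqmodZ_trans (qsum_mxact hlam k_gt0 _ (qmat_orthogonal d)) _.
have [t dt] := dvdnP d_sqrt.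
rewrite /eqmodZ opprK -[X in _ + X]mul1r -mulrDl.
have -> : (6 + d%:Z ^+ 2)%:~R + 1 = (t * 2 ^ m)%N%:R :> rat.
  by rewrite [RHS]pmulrn -dt -qmat_norm_succ !intrD.
rewrite natrM -mulrA /qsum mulr_sumr; apply: rpredM; first exact: rpred_nat.
by apply: rpred_sum => i _; apply: qrep_exp.
Qed.

End Quaternion.

Lemma expr_sum_ffun (R : comPzSemiRingType) (T : finType) (F : T -> R) n :
  (\sum_x F x) ^+ n = \sum_(f : {ffun 'I_n -> T}) \prod_i F (f i).
Proof.
rewrite -[in LHS](card_ord n) -prodr_const.
exact: (bigA_distr_bigA (fun (i : 'I_n) (x : T) => F x)).
Qed.

Lemma gauss_sum_pow4 (R : realType) (G : finZmodType) (lam : G -> G -> rat) k :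
    linking_pairing lam -> (0 < k)%N -> is_2group G ->
  (\sum_x expi2pi R (qrep lam k x)) ^+ 4 = (\sum_x expi2pi R (- qrep lam k x)) ^+ 4.
Proof.
move=> hlam k_gt0 G2; have [m G_exp] := is_2group_exponent G2.
have [d d_sqrt] := exists_sqrt_neg7_mod2X m.
rewrite !expr_sum_ffun; under eq_bigr do rewrite -expi2pi_sum.
rewrite (reindex_inj (mxact_qmat_inj G_exp d_sqrt)); apply: eq_bigr => f _.
rewrite (expi2pi_eqmodZ _ (qsum_qmat G_exp d_sqrt hlam k_gt0 f)) -sumrN.
by rewrite expi2pi_sum.
Qed.

Lemma uk_eq (R : realType) (G : finZmodType) (lam : G -> G -> rat) k (u : 'Z_8) :
  gammak R lam k = root8 R u -> uk R lam k = u.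
Proof.
rewrite /uk; case: pickP => [v /eqP gv | none] gu.
  exact: root8_inj (etrans (esym gv) gu).
by have := none u; rewrite gu eqxx.
Qed.

Section EighthRoot.
Variables (R : realType) (G : finZmodType) (lam : G -> G -> rat) (k : nat).
Hypotheses (hlam : linking_pairing lam) (k_gt0 : (0 < k)%N).
Hypotheses (halt : bk_alternating lam k) (G2 : is_2group G).

Lemma gammak_pow8 : gammak R lam k ^+ 8 = 1.
Proof.
rewrite (gammakE R hlam k_gt0 halt).
set s := Num.sqrt _; set T := \sum_x _; set h := #|Hk G k|; set g := #|Gk G k|.
have T8 : T ^+ 8 = (h * g * g)%:R ^+ 4.
  rewrite -[8%N]/(4 + 4)%N exprD {2}(gauss_sum_pow4 R hlam k_gt0 G2) -exprMn.
  by rewrite gauss_sum_norm // (card_Hk G k).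
have s2 : s ^+ 2 = h%:R by rewrite sqr_sqrtr ?ler0n.
rewrite !exprMn T8 -rmorphXn exprVn (exprM s 2 4) s2 fmorphV rmorphXn rmorph_nat.
have h0 : h%:R != 0 :> R[i] by rewrite pnatr_eq0 -lt0n card_Hk_gt0.
have g0 : g%:R != 0 :> R[i] by rewrite pnatr_eq0 -lt0n card_Gk_gt0.
by rewrite !natrM; field; rewrite g0 h0.
Qed.

Lemma gammak_uk : gammak R lam k = root8 R (uk R lam k).
Proof. by have [u gu] := root8_onto gammak_pow8; rewrite (uk_eq gu). Qed.

End EighthRoot.

Section OrthogonalSum.
Variables (G G' : finZmodType) (lam : G -> G -> rat) (lam' : G' -> G' -> rat) (k : nat).
Local Notation GG' := (prodZ G G').
Local Notation mu := (osum lam lam').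

Lemma mem_Gk_osum (p : GG') : (p \in Gk GG' k) = (p.1 \in Gk G k) && (p.2 \in Gk G' k).
Proof.
rewrite !inE; apply/eqP/andP => [pn0 | [/eqP p1n /eqP p2n]].
  by split; apply/eqP; [have := congr1 fst pn0 | have := congr1 snd pn0]; rewrite raddfMn.
by apply: injective_projections; rewrite raddfMn.
Qed.

Lemma card_Gk_osum : #|Gk GG' k| = (#|Gk G k| * #|Gk G' k|)%N.
Proof. by rewrite -cardsX; apply: eq_card => p; rewrite mem_Gk_osum !inE. Qed.

Lemma card_Hk_osum : #|Hk GG' k| = (#|Hk G k| * #|Hk G' k|)%N.
Proof.
apply/eqP; rewrite -(@eqn_pmul2r (#|Gk G k| * #|Gk G' k|)) ?muln_gt0 ?card_Gk_gt0 //.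
rewrite -card_Gk_osum -card_Hk card_prod (card_Hk G k) (card_Hk G' k).
by rewrite card_Gk_osum mulnACA.
Qed.

Lemma qrep_osum p : qrep mu k p = qrep lam k p.1 + qrep lam' k p.2.
Proof. exact: mulrDr. Qed.

Lemma osum_linking : linking_pairing lam -> linking_pairing lam' -> linking_pairing mu.
Proof.
move=> hlam hlam'; case: (hlam) (hlam') => lamD lamC nonsing [lamD' lamC' nonsing'].
split.
- move=> x y z; have := rpredD (lamD x.1 y.1 z.1) (lamD' x.2 y.2 z.2).
  by rewrite /osum; congr intQ; rewrite /=; ring.
- move=> x y; have := rpredD (lamC x.1 y.1) (lamC' x.2 y.2).
  by rewrite /osum; congr intQ; ring.
- case=> a b ab_nonsing; apply: injective_projections => /=.
    apply: nonsing => y; have := ab_nonsing (y, 0).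
    by rewrite /osum /= /intQ (rpredDr _ (linking0r hlam' b)).
  apply: nonsing' => y; have := ab_nonsing (0, y).
  by rewrite /osum /= /intQ (rpredDl _ (linking0r hlam a)).
Qed.

Lemma osum_alternating :
  bk_alternating lam k -> bk_alternating lam' k -> bk_alternating mu k.
Proof.
move=> alt alt' p; rewrite mem_Gk_osum => /andP[Gkp1 Gkp2].
by have := rpredD (alt _ Gkp1) (alt' _ Gkp2); rewrite /bk /osum; congr intQ; ring.
Qed.

Variable R : realType.
Local Notation e := (expi2pi R).

Lemma sum_expi2pi_qrep_osum :
  \sum_p e (qrep mu k p) = (\sum_x e (qrep lam k x)) * (\sum_y e (qrep lam' k y)).
Proof.
rewrite big_distrlr pair_bigA; apply: eq_bigr => p _.
by rewrite qrep_osum expi2piD.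
Qed.

Lemma gammak_osum :
    linking_pairing lam -> linking_pairing lam' -> (0 < k)%N ->
    bk_alternating lam k -> bk_alternating lam' k ->
  gammak R mu k = gammak R lam k * gammak R lam' k.
Proof.
move=> hlam hlam' k_gt0 alt alt'.
rewrite (gammakE R (osum_linking hlam hlam') k_gt0 (osum_alternating alt alt')).
rewrite (gammakE R hlam k_gt0 alt) (gammakE R hlam' k_gt0 alt').
rewrite sum_expi2pi_qrep_osum card_Hk_osum card_Gk_osum !natrM sqrtrM ?ler0n //.
by rewrite invfM rmorphM invfM; ring.
Qed.

End OrthogonalSum.

Theorem lemma5p15 (R : realType) (k : nat) (G G' : finZmodType)
  (lam : G -> G -> rat) (lam' : G' -> G' -> rat) :
  (1 <= k)%N ->
  is_2group G -> is_2group G' ->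
  linking_pairing lam -> linking_pairing lam' ->
  bk_alternating lam k -> bk_alternating lam' k ->
  bk_alternating (osum lam lam') k /\
  uk R (osum lam lam') k = uk R lam k + uk R lam' k.
Proof.
move=> k_gt0 G2 G2' hlam hlam' alt alt'.
split; first exact: osum_alternating.
apply: uk_eq; rewrite (gammak_osum R hlam hlam' k_gt0 alt alt').
by rewrite (gammak_uk R hlam k_gt0 alt G2) (gammak_uk R hlam' k_gt0 alt' G2') root8D.
Qed.
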